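(* Let $X$ be a topological space and $q,k\ge1$ integers. If $X$ has finitely many connected components and all of them are contractible, then $X^q_k$ also has finitely many connected components and all of them are contractible.
   Context: $X^q_k=\{(x_1,\dots,x_q)\in X^q:|\{x_1,\dots,x_q\}|\le k\}$, with the subspace topology of the product $X^q$. *)

From HB Require Import structures.
From mathcomp Require Import all_boot all_order all_algebra.
From mathcomp Require Import all_classical all_reals all_analysis.
From mathcomp Require Import Rstruct Rstruct_topology.
From Stdlib Require Import Reals.
Set Implicit Arguments. Unset Strict Implicit. Unset Printing Implicit Defensive.
Import Order.TTheory GRing.Theory Num.Theory.
Local Open Scope classical_set_scope.
Local Open Scope ring_scope.

Definition unit_interval : set R := `[0%R, 1%R]%classic.

Definition contractible (T : topologicalType) (C : set T) : Prop :=
  exists c : T, C c /\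
  exists H : R * T -> T,
    {within unit_interval `*` C, continuous H} /\
    (forall t x, unit_interval t -> C x -> C (H (t, x))) /\
    (forall x, C x -> H (0%R, x) = x) /\
    (forall x, C x -> H (1%R, x) = c).

Definition components (T : topologicalType) (A : set T) : set (set T) :=
  [set connected_component A x | x in A].

Definition fin_contractible_components (T : topologicalType) (A : set T) : Prop :=
  finite_set (components A) /\ (forall C, components A C -> contractible C).

(* X^q_k = { (x_1,..,x_q) in X^q : |{x_1,..,x_q}| <= k }, as a subset of the
   product space X^q = {ptws 'I_q -> X} (product topology). *)
Definition Xqk (X : topologicalType) (q k : nat) : set {ptws 'I_q -> X} :=
  [set x | (range x #<= [set: 'I_k])%card].

From HB Require Import structures.
From mathcomp Require Import all_boot all_order all_algebra.
From mathcomp Require Import all_classical all_reals all_analysis.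
From mathcomp Require Import Rstruct Rstruct_topology.
From Stdlib Require Import Reals.
Import Order.TTheory GRing.Theory Num.Theory.
Local Open Scope classical_set_scope.

(* Components of X are open (there are finitely many, all closed), so the
   contractions of the components glue to one homotopy G : [0,1] x X -> X from
   the identity that keeps each point in its component and is constant on each
   component at time 1.  Applied coordinatewise, G never increases the number
   of distinct coordinates, hence acts on X^q_k, and it contracts each set
   {x in X^q_k | x_i and x0_i lie in the same component of X for all i} onto a
   point.  These sets are therefore connected, and since the coordinate
   projections are continuous they are exactly the components of X^q_k; there
   are at most (number of components of X)^q of them. *)

Section within_continuity.
Context {T U V : topologicalType}.

Lemma within_setI_nbhs (A B : set T) (x : T) :
  nbhs x B -> within (A `&` B) (nbhs x) = within A (nbhs x).
Proof.
move=> Bx; rewrite eqEsubset; split => P; last first.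
  by apply: within_subset => // y [].
rewrite /within /= => AP; near=> y => Ay.
by apply: (near AP y) => //; split => //; near: y.
Unshelve. all: by end_near. Qed.

Lemma within_continuous_local (A : set T) (f : T -> U) :
  (forall x, A x -> exists2 B, nbhs x B & {within A `&` B, continuous f}) ->
  {within A, continuous f}.
Proof.
move=> loc; apply/subspace_continuousP => x Ax.
have [B Bx /subspace_continuousP fAB] := loc x Ax.
rewrite -(within_setI_nbhs A B x Bx); apply: fAB; split => //.
exact: nbhs_singleton.
Qed.

Lemma cvg_within_image (A : set T) (B : set U) (f : T -> U) (x : T) :
  {for x, continuous f} -> (forall y, A y -> B (f y)) ->
  f @ within A (nbhs x) --> within B (nbhs (f x)).
Proof.
move=> fx AB P /= /fx; rewrite /within /= !nbhs_simpl /= => fBP.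
by apply: filterS fBP => y + Ay; apply; exact: AB.
Qed.

Lemma within_continuous_comp_image (A : set T) (B : set U)
    (f : T -> U) (g : U -> V) :
  continuous f -> (forall x, A x -> B (f x)) -> {within B, continuous g} ->
  {within A, continuous (g \o f)}.
Proof.
move=> cf AB /subspace_continuousP cg; apply/subspace_continuousP => x Ax.
apply: cvg_comp (cg _ (AB _ Ax)); exact: (cvg_within_image A B f x (cf x) AB).
Qed.

End within_continuity.

Lemma cvg_ptws (I : Type) (X : topologicalType) (F : set_system {ptws I -> X})
    (f : {ptws I -> X}) :
  Filter F -> (forall i, (fun g : I -> X => g i) @ F --> f i) -> F --> f.
Proof.
move=> FF Fi; apply/cvg_sup => i A /=.
rewrite (@nbhsE (initial_topology (fun g : I -> X => g i))).
move=> -[B [[U oU <-] Bf] BA].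
by apply: filterS BA _; apply: Fi; apply: open_nbhs_nbhs.
Qed.

Lemma continuous_fst_proj (I : eqType) (S X : topologicalType) (i : I) :
  continuous (fun p : S * {ptws I -> X} => (p.1, p.2 i)).
Proof.
move=> p; apply: (@cvg_pair _ _ _ _ (nbhs p.1) (nbhs (p.2 i))).
  exact: cvg_fst.
apply: (@cvg_comp _ _ _ snd (fun g : {ptws I -> X} => g i) _ (nbhs p.2)).
  exact: cvg_snd.
exact: (@proj_continuous _ (fun=> X) i p.2).
Qed.

Lemma finite_components_open (X : topologicalType) (y : X) :
  finite_set (components [set: X]) -> open (connected_component [set: X] y).
Proof.
move=> fin.
have -> : connected_component [set: X] y =
    ~` \bigcup_(D in [set D | components [set: X] D /\ ~ D y]) D.
  apply/seteqP; split => z.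
    move=> yz [_ [[w _ <-] wy] wz]; apply: wy.
    rewrite (same_connected_component wz) -(same_connected_component yz).
    exact: connected_component_refl.
  move=> nz; apply: contrapT => nyz; apply: nz.
  exists (connected_component [set: X] z); last exact: connected_component_refl.
  by split; [exists z | move/connected_component_sym].
rewrite openC; apply: closed_bigcup; first by apply: sub_finite_set fin => D [].
by move=> _ [[w _ <-] _]; apply: component_closed; exact: closedT.
Qed.

Definition component_contraction {X : topologicalType} (G : R * X -> X) :=
  [/\ {within unit_interval `*` [set: X], continuous G},
    forall t y, unit_interval t -> connected_component [set: X] y (G (t, y)),
    forall y, G (0%R, y) = y &
    forall y z, connected_component [set: X] y z -> G (1%R, y) = G (1%R, z)].

Lemma component_contraction_exists {X : topologicalType} :
  fin_contractible_components [set: X] ->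
  exists G : R * X -> X, component_contraction G.
Proof.
move=> [fin ctr].
pose comp := connected_component [set: X].
have compP y : components [set: X] (comp y) by exists y.
have compE y z : comp y z -> comp z = comp y.
  by move=> yz; rewrite /comp (same_connected_component yz).
(* The choice below needs a default value, hence a point of X. *)
have [[x0 _]|X0] := pselect (exists x : X, True); last first.
  have {}X0 (y : X) : False by apply: X0; exists y.
  by exists snd; split => [p|t y|y|y]; [case: (X0 p.2)|case: (X0 y)..].
pose contraction (C : set X) (cH : X * (R * X -> X)) :=
  [/\ {within unit_interval `*` C, continuous cH.2},
    forall t x, unit_interval t -> C x -> C (cH.2 (t, x)),
    forall x, C x -> cH.2 (0%R, x) = x &
    forall x, C x -> cH.2 (1%R, x) = cH.1].
have /choice[ch chP] C : exists cH, components [set: X] C -> contraction C cH.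
  have [cC|ncC] := pselect (components [set: X] C); last by exists (x0, snd).
  by have [c [_ [H [? [? [? ?]]]]]] := ctr C cC; exists (c, H).
exists (fun p => (ch (comp p.2)).2 p); split.
- apply: within_continuous_local => -[t y] [It _].
  have [Hc _ _ _] := chP _ (compP y).
  exists (setT `*` comp y).
    exists (setT, comp y) => //=; split; first exact: filterT.
    apply: open_nbhs_nbhs; split; first exact: finite_components_open.
    exact: connected_component_refl.
  rewrite -setXI setIT setTI.
  apply: subspace_eq_continuous Hc => -[s z] /[1!inE] -[_ /= yz].
  by rewrite /from_subspace /= (compE _ _ yz).
- move=> t y It /=; have [_ HC _ _] := chP _ (compP y).
  by apply: HC => //; exact: connected_component_refl.
- move=> y /=; have [_ _ H0 _] := chP _ (compP y).
  by apply: H0; exact: connected_component_refl.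
- move=> y z yz /=; rewrite (compE _ _ yz).
  have [_ _ _ H1] := chP _ (compP y).
  by rewrite !H1 //; exact: connected_component_refl.
Qed.

Lemma unit_interval0 : unit_interval 0%R.
Proof. by rewrite /unit_interval/= in_itv/= lexx ler01. Qed.

Lemma unit_interval1 : unit_interval 1%R.
Proof. by rewrite /unit_interval/= in_itv/= lexx ler01. Qed.

Definition component_type {X : topologicalType} {I : Type} (x : I -> X) :
  I -> set X := fun i => connected_component [set: X] (x i).

Definition ptws_homotopy {X : topologicalType} {I : Type} (G : R * X -> X)
  (p : R * {ptws I -> X}) : {ptws I -> X} := fun i => G (p.1, p.2 i).

Definition component_class {X : topologicalType} {I : Type}
  (A : set {ptws I -> X}) (x0 : I -> X) : set {ptws I -> X} :=
  A `&` [set x | component_type x = component_type x0].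

Section ptws_contraction.
Context {X : topologicalType} {I : eqType} {G : R * X -> X}.
Context (G_contr : component_contraction G).
Context {A : set {ptws I -> X}}.
Context (A_comp : forall (f : X -> X) (x : {ptws I -> X}), A x -> A (f \o x)).
Local Notation ptws_homotopy := (@ptws_homotopy X I G).
Local Notation component_class := (component_class A).

Lemma ptws_homotopy_continuous (B : set {ptws I -> X}) :
  {within unit_interval `*` B, continuous ptws_homotopy}.
Proof.
have [Gc _ _ _] := G_contr.
apply/subspace_continuousP => -[t x] [It Bx]; apply: cvg_ptws => i.
have Gi : {within unit_interval `*` B,
    continuous (G \o fun p : R * {ptws I -> X} => (p.1, p.2 i))}.
  apply: within_continuous_comp_image Gc => [p|p [Ip _]]//.
  exact: continuous_fst_proj.
by move/subspace_continuousP : Gi; apply.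
Qed.

Lemma ptws_homotopy0 x : ptws_homotopy (0%R, x) = x.
Proof. by have [_ _ G0 _] := G_contr; apply: funext => i; exact: G0. Qed.

Lemma ptws_homotopy_class x0 t x : unit_interval t ->
  component_class x0 x -> component_class x0 (ptws_homotopy (t, x)).
Proof.
have [_ GC _ _] := G_contr => It [Ax xx0].
split; first exact: (A_comp (fun y => G (t, y))).
rewrite /= -xx0; apply: funext => i; rewrite /component_type /=.
exact/esym/same_connected_component/GC.
Qed.

Lemma ptws_homotopy1 x0 x :
  component_class x0 x -> ptws_homotopy (1%R, x) = ptws_homotopy (1%R, x0).
Proof.
have [_ _ _ G1] := G_contr => -[_ xx0]; apply: funext => i; apply: G1.
by change (component_type x i (x0 i)); rewrite xx0; exact: connected_component_refl.
Qed.

Lemma component_class_connected x0 : connected (component_class x0).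
Proof.
have -> : component_class x0 = \bigcup_(x in component_class x0)
    ((fun t => ptws_homotopy (t, x)) @` unit_interval).
  apply/seteqP; split => [x Cx|_ [x Cx [t It <-]]].
    exists x => //; exists 0%R; [exact: unit_interval0|exact: ptws_homotopy0].
  exact: ptws_homotopy_class.
apply: bigcup_connected.
  exists (ptws_homotopy (1%R, x0)) => x Cx.
  by exists 1%R; [exact: unit_interval1|exact: ptws_homotopy1].
move=> x Cx; apply: connected_continuous_connected.
  exact: segment_connected.
change (fun t => ptws_homotopy (t, x)) with (ptws_homotopy \o pair^~ x).
apply: within_continuous_comp_image
  (ptws_homotopy_continuous (component_class x0)).
  move=> t; apply: (@cvg_pair _ _ _ _ (nbhs t) (nbhs x)).
    exact: cvg_id.
  exact: cvg_cst.
by move=> t It.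
Qed.

Lemma connected_component_ptws x0 : A x0 ->
  connected_component A x0 = component_class x0.
Proof.
move=> Ax0; apply/seteqP; split; last first.
  apply: connected_component_max => [//|x []//|].
  exact: component_class_connected.
move=> y [B [Bx0 BA Bc By]]; split; first exact: BA.
apply: funext => i; apply/esym/same_connected_component.
have : (fun x : {ptws I -> X} => x i) @` B `<=`
    connected_component [set: X] (x0 i).
  apply: connected_component_max => //; first by exists x0.
  apply: connected_continuous_connected => //.
  exact/continuous_subspaceT/(@proj_continuous _ (fun=> X) i).
by apply; exists y.
Qed.

Lemma component_class_contractible x0 :
  A x0 -> contractible (component_class x0).
Proof.
move=> Ax0; exists (ptws_homotopy (1%R, x0)); split.
  by apply: ptws_homotopy_class; [exact: unit_interval1 | split].
exists ptws_homotopy; split; first exact: ptws_homotopy_continuous.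
split; first by move=> t x; exact: ptws_homotopy_class.
by split => x Cx; [exact: ptws_homotopy0 | exact: ptws_homotopy1].
Qed.

End ptws_contraction.

Lemma finite_set_fun (I : finType) {T : choiceType} {K : set T} :
  finite_set K -> finite_set [set f : I -> T | forall i, K (f i)].
Proof.
move=> /finite_seqP[s sK].
pose embed (h : {ffun I -> seq_sub s}) (i : I) := ssval (h i).
apply: sub_finite_set (finite_image embed (@finite_finset _ setT)) => f Kf.
have fs i : f i \in s by have := Kf i; rewrite sK.
exists [ffun i => SeqSub (fs i)] => //.
by apply: funext => i; rewrite /embed ffunE.
Qed.

Lemma fin_contractible_components_ptws (X : topologicalType) (I : finType)
    (A : set {ptws I -> X}) :
  (forall (f : X -> X) (x : {ptws I -> X}), A x -> A (f \o x)) ->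
  fin_contractible_components [set: X] -> fin_contractible_components A.
Proof.
move=> A_comp hX; have [G G_contr] := component_contraction_exists hX.
split; last first.
  move=> _ [x0 Ax0 <-]; rewrite (connected_component_ptws G_contr A_comp) //.
  exact: (component_class_contractible G_contr A_comp).
pose class (ct : I -> set X) := A `&` [set x | component_type x = ct].
apply: sub_finite_set (finite_image class (finite_set_fun I hX.1)).
move=> _ [x0 Ax0 <-].
rewrite (connected_component_ptws G_contr A_comp) //.
by exists (component_type x0) => // i; exists (x0 i).
Qed.

Lemma Xqk_comp (X : topologicalType) (q k : nat) (f : X -> X)
    (x : {ptws 'I_q -> X}) :
  Xqk k x -> Xqk k (f \o x).
Proof.
rewrite /Xqk /= => xk; apply: card_le_trans xk; rewrite -image_comp.
exact: card_image_le.
Qed.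

Theorem lemma5p12 (X : topologicalType) (q k : nat) :
  (1 <= q)%N -> (1 <= k)%N ->
  fin_contractible_components [set: X] ->
  fin_contractible_components (@Xqk X q k).
Proof.
move=> _ _; apply: fin_contractible_components_ptws; exact: Xqk_comp.
Qed.
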